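(* Let $L$ be a frame. The map $\nu(F)=\bigcap_{a\in F}\mathfrak o(a)$ restricts to an order isomorphism from $(\mathrm{Int}(\mathsf{SO}(L)),\sqsubseteq)$ onto $(\{\mathrm{fit}(S)\mid S\in\mathcal S_k(L)\},\subseteq)$, with inverse $S\mapsto\{a\in L\mid S\subseteq\mathfrak o(a)\}$.
   Context: A frame is a complete lattice $L$ with $(\bigvee A)\wedge b=\bigvee_{a\in A}(a\wedge b)$, Heyting implication $\to$. A sublocale is a subset $S\subseteq L$ closed under all meets with $a\to s\in S$ for $a\in L,s\in S$; sublocales form a coframe $\mathsf{Sl}(L)$ under inclusion with joins $\bigvee_i S_i=\{\bigwedge A\mid A\subseteq\bigcup_i S_i\}$. $\mathfrak o(a)=\{a\to b\mid b\in L\}$. $\mathrm{fit}(S)=\bigcap\{\mathfrak o(a)\mid S\subseteq\mathfrak o(a)\}$. A sublocale $S$ is compact if $S\subseteq\bigvee_{a\in A}\mathfrak o(a)$ implies $S\subseteq\mathfrak o(a_1)\vee\dots\vee\mathfrak o(a_n)$ for some $a_1,\dots,a_n\in A$; $\mathcal S_k(L)$ is the set of joins in $\mathsf{Sl}(L)$ of compact sublocales. Filters are nonempty up-closed subsets closed under finite meets, ordered by reverse inclusion $\sqsubseteq$; a filter $F$ is Scott-open if every directed $D$ with $\bigvee D\in F$ meets $F$; $\mathsf{SO}(L)$ is the set of Scott-open filters, and $\mathrm{Int}(\mathsf{SO}(L))$ the set of intersections of subfamilies of it (empty intersection $=L$). *)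

Set Implicit Arguments.
Unset Strict Implicit.
From Stdlib Require Import List.

Record frame := Frame {
  carrier :> Type;
  le : carrier -> carrier -> Prop;
  le_refl : forall a, le a a;
  le_trans : forall a b c, le a b -> le b c -> le a c;
  le_antisym : forall a b, le a b -> le b a -> a = b;
  sup : (carrier -> Prop) -> carrier;
  sup_ub : forall (A : carrier -> Prop) a, A a -> le a (sup A);
  sup_least : forall (A : carrier -> Prop) b, (forall a, A a -> le a b) -> le (sup A) b;
  meet : carrier -> carrier -> carrier;
  meet_glb : forall a b c, le c (meet a b) <-> (le c a /\ le c b);
  meet_sup_distr : forall (A : carrier -> Prop) b,
      meet (sup A) b = sup (fun x => exists a, A a /\ x = meet a b);
  imp : carrier -> carrier -> carrier;
  imp_adj : forall a b c, le c (imp a b) <-> le (meet c a) b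
}.

Arguments le {f} _ _.
Arguments sup {f} _.
Arguments meet {f} _ _.
Arguments imp {f} _ _.

Section FrameDefs.
Context {L : frame}.

Definition subset (A B : L -> Prop) : Prop := forall x, A x -> B x.
Definition same (A B : L -> Prop) : Prop := forall x, A x <-> B x.

Definition inf (A : L -> Prop) : L := sup (fun x => forall a, A a -> le x a).

Definition sublocale (S : L -> Prop) : Prop :=
  (forall A : L -> Prop, subset A S -> S (inf A)) /\
  (forall a s, S s -> S (imp a s)).

(** Join in the coframe Sl(L) of a family of sublocales:
    { /\ A | A subset of the union of the family }. *)
Definition sl_join (Fam : (L -> Prop) -> Prop) : L -> Prop :=
  fun x => exists A : L -> Prop,
      (forall b, A b -> exists S, Fam S /\ S b) /\ x = inf A.

Definition opn (a : L) : L -> Prop := fun x => exists b, x = imp a b.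

Definition fit (S : L -> Prop) : L -> Prop :=
  fun x => forall a, subset S (opn a) -> opn a x.

Definition opens_of (A : L -> Prop) : (L -> Prop) -> Prop :=
  fun T => exists a, A a /\ T = opn a.
Definition opens_of_list (l : list L) : (L -> Prop) -> Prop :=
  fun T => exists a, In a l /\ T = opn a.

Definition compact_sl (S : L -> Prop) : Prop :=
  sublocale S /\
  forall A : L -> Prop, subset S (sl_join (opens_of A)) ->
    exists l : list L, (forall a, In a l -> A a) /\
                       subset S (sl_join (opens_of_list l)).

Definition Sk (S : L -> Prop) : Prop :=
  exists Fam : (L -> Prop) -> Prop,
    (forall T, Fam T -> compact_sl T) /\ same S (sl_join Fam).

Definition filter (F : L -> Prop) : Prop :=
  (exists a, F a) /\
  (forall a b, F a -> le a b -> F b) /\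
  (forall a b, F a -> F b -> F (meet a b)).

Definition directed (D : L -> Prop) : Prop :=
  (exists d, D d) /\
  (forall a b, D a -> D b -> exists c, D c /\ le a c /\ le b c).

Definition scott_open_filter (F : L -> Prop) : Prop :=
  filter F /\
  forall D : L -> Prop, directed D -> F (sup D) -> exists d, D d /\ F d.

(** Int(SO(L)): intersections of families of Scott-open filters
    (the empty intersection being L). *)
Definition IntSO (F : L -> Prop) : Prop :=
  exists G : (L -> Prop) -> Prop,
    (forall H, G H -> scott_open_filter H) /\
    same F (fun x => forall H, G H -> H x).

Definition filter_le (F G : L -> Prop) : Prop := subset G F.

Definition fitSk (T : L -> Prop) : Prop := exists S, Sk S /\ same T (fit S).

Definition nu (F : L -> Prop) : L -> Prop := fun x => forall a, F a -> opn a x.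
Definition nu_inv (S : L -> Prop) : L -> Prop := fun a => subset S (opn a).

End FrameDefs.

(* The heart of the matter is the localic Hofmann–Mislove theorem: a Scott-open
   filter H is recovered from the fitted sublocale nu(H) as the set of a with
   nu(H) ⊆ o(a).  If b ∉ H, the elements above b outside H form a sub-dcpo
   (H is Scott-open) preserved by the inflationary map y ↦ ⋁_{a∈H}(a → y)
   (H is a filter); by Pataraia's fixpoint theorem it has a fixpoint z there,
   and a fixpoint lies in nu(H) but not in o(b).  The same Scott-openness makes
   nu(H) compact, and conversely {a | K ⊆ o(a)} is a Scott-open filter for
   compact K.  Everything else is the Galois connection between nu and its
   inverse, which turns intersections of filters into joins of sublocales. *)
From Stdlib Require Import List Classical.

Set Implicit Arguments.
Unset Strict Implicit.

Section Frame.
Context {L : frame}.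
Implicit Types a b c x y : L.

Lemma meet_lb_l a b : le (meet a b) a.
Proof. exact (proj1 (proj1 (meet_glb a b (meet a b)) (le_refl _))). Qed.

Lemma meet_lb_r a b : le (meet a b) b.
Proof. exact (proj2 (proj1 (meet_glb a b (meet a b)) (le_refl _))). Qed.

Lemma le_meet a b c : le c a -> le c b -> le c (meet a b).
Proof. intros; apply meet_glb; auto. Qed.

Lemma meet_mono a a' b b' : le a a' -> le b b' -> le (meet a b) (meet a' b').
Proof.
  intros; apply le_meet.
  - eapply le_trans; [apply meet_lb_l | assumption].
  - eapply le_trans; [apply meet_lb_r | assumption].
Qed.

Lemma meet_comm_le a b : le (meet a b) (meet b a).
Proof. apply le_meet; [apply meet_lb_r | apply meet_lb_l]. Qed.

Lemma le_imp a b c : le (meet c a) b -> le c (imp a b).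
Proof. apply imp_adj. Qed.

Lemma imp_modus_ponens a b : le (meet (imp a b) a) b.
Proof. apply imp_adj, le_refl. Qed.

Lemma le_imp_r a x : le x (imp a x).
Proof. apply le_imp, meet_lb_l. Qed.

Lemma imp_mono_r a x y : le x y -> le (imp a x) (imp a y).
Proof. intros Hxy; apply le_imp; eapply le_trans; [apply imp_modus_ponens | exact Hxy]. Qed.

Lemma imp_anti_l a a' x : le a a' -> le (imp a' x) (imp a x).
Proof.
  intros Ha; apply le_imp; eapply le_trans; [| apply imp_modus_ponens].
  apply meet_mono; [apply le_refl | exact Ha].
Qed.

Lemma inf_lb (A : L -> Prop) y : A y -> le (inf A) y.
Proof. intros Ay; apply sup_least; intros x Hx; apply Hx, Ay. Qed.

Lemma le_inf (A : L -> Prop) c : (forall y, A y -> le c y) -> le c (inf A).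
Proof. intros H; apply sup_ub, H. Qed.

Lemma inf_singleton x : inf (fun y => y = x) = x.
Proof.
  apply le_antisym; [apply inf_lb; reflexivity |].
  apply le_inf; intros y ->; apply le_refl.
Qed.

Definition top : L := sup (fun _ => True).

Lemma le_top x : le x top.
Proof. exact (@sup_ub _ (fun _ => True) x I). Qed.

Lemma opn_iff a x : opn a x <-> imp a x = x.
Proof.
  split; [| intros E; exists x; symmetry; exact E].
  intros [b ->]; apply le_antisym; [| apply le_imp_r].
  apply le_imp; eapply le_trans; [| apply (imp_modus_ponens a b)].
  apply le_meet; [apply imp_modus_ponens | apply meet_lb_r].
Qed.

Lemma opn_of_imp_le a x : le (imp a x) x -> opn a x.
Proof. intros H; apply opn_iff, le_antisym; [exact H | apply le_imp_r]. Qed.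

Lemma opn_top x : opn top x.
Proof.
  apply opn_of_imp_le; eapply le_trans; [| apply (imp_modus_ponens top x)].
  apply le_meet; [apply le_refl | apply le_top].
Qed.

Lemma opn_mono a a' x : le a a' -> opn a x -> opn a' x.
Proof.
  intros Ha Hx; apply opn_iff in Hx; apply opn_of_imp_le.
  rewrite <- Hx at 2; apply imp_anti_l, Ha.
Qed.

(* Currying: (a ∧ b) → x = b → (a → x). *)
Lemma opn_meet a b x : opn a x -> opn b x -> opn (meet a b) x.
Proof.
  intros Ha Hb; apply opn_iff in Ha; apply opn_iff in Hb; apply opn_of_imp_le.
  apply (@le_trans _ _ (imp b (imp a x))); [| rewrite Ha, Hb; apply le_refl].
  apply le_imp, le_imp; eapply le_trans; [| apply imp_modus_ponens].
  apply le_meet.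
  - eapply le_trans; apply meet_lb_l.
  - apply le_meet; [apply meet_lb_r |].
    eapply le_trans; [apply meet_lb_l | apply meet_lb_r].
Qed.

Lemma opn_inf a (A : L -> Prop) : (forall y, A y -> opn a y) -> opn a (inf A).
Proof.
  intros H; apply opn_of_imp_le, le_inf; intros y Ay.
  eapply le_trans; [apply imp_mono_r, inf_lb, Ay |].
  rewrite (proj1 (opn_iff a y) (H y Ay)); apply le_refl.
Qed.

(* Exchange: c → (a → s) = a → (c → s). *)
Lemma opn_imp a c s : opn a s -> opn a (imp c s).
Proof.
  intros Ha; apply opn_iff in Ha; apply opn_of_imp_le.
  apply (@le_trans _ _ (imp c (imp a s))); [| rewrite Ha; apply le_refl].
  apply le_imp, le_imp; eapply le_trans; [| apply (imp_modus_ponens c s)].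
  apply le_meet.
  - eapply le_trans; [| apply (imp_modus_ponens a)].
    apply le_meet; [eapply le_trans; apply meet_lb_l | apply meet_lb_r].
  - eapply le_trans; [apply meet_lb_l | apply meet_lb_r].
Qed.

Lemma sl_join_incl (Fam : (L -> Prop) -> Prop) S : Fam S -> subset S (sl_join Fam).
Proof.
  intros FS x Sx; exists (fun y => y = x); split.
  - intros b ->; exists S; auto.
  - symmetry; apply inf_singleton.
Qed.

Lemma sl_join_sub_opn (Fam : (L -> Prop) -> Prop) a :
  (forall S, Fam S -> subset S (opn a)) -> subset (sl_join Fam) (opn a).
Proof.
  intros H x [A [HA ->]]; apply opn_inf; intros y Ay.
  destruct (HA y Ay) as [S [FS Sy]]; exact (H S FS y Sy).
Qed.

Lemma sl_join_opens_of (A : L -> Prop) : same (sl_join (opens_of A)) (opn (sup A)).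
Proof.
  intros x; split.
  - revert x; apply sl_join_sub_opn; intros S [a [Aa ->]] x.
    apply opn_mono, sup_ub, Aa.
  - intros Hx; apply opn_iff in Hx.
    exists (fun y => exists a, A a /\ y = imp a x); split.
    + intros y [a [Aa ->]]; exists (opn a); split; [exists a; auto | exists x; reflexivity].
    + apply le_antisym; [apply le_inf; intros y [a [_ ->]]; apply le_imp_r |].
      rewrite <- Hx at 1; apply le_imp.
      eapply le_trans; [apply meet_comm_le |]; rewrite meet_sup_distr.
      apply sup_least; intros z [a [Aa ->]].
      eapply le_trans; [apply meet_comm_le |].
      eapply le_trans; [| apply (imp_modus_ponens a x)].
      apply meet_mono; [apply inf_lb; exists a; auto | apply le_refl].
Qed.

Section Pataraia.
Variables (D : L -> Prop) (k : L -> L).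
Hypothesis D_directed_sup : forall E, directed E -> subset E D -> D (sup E).
Hypothesis k_mono : forall x y, le x y -> le (k x) (k y).
Hypothesis k_inflationary : forall x, le x (k x).
Hypothesis k_preserves_D : forall x, D x -> D (k x).

Let admissible (f : L -> L) : Prop :=
  (forall x y, le x y -> le (f x) (f y)) /\ (forall x, le x (f x)) /\
  (forall x, D x -> D (f x)).

Let admissible_id : admissible (fun x => x).
Proof. split; [| split]; auto using le_refl. Qed.

Let admissible_comp f g : admissible f -> admissible g -> admissible (fun x => f (g x)).
Proof.
  intros [f1 [f2 f3]] [g1 [g2 g3]]; split; [| split]; auto.
  intros x; eapply le_trans; [apply g2 | apply f2].
Qed.

Let orbit x : L -> Prop := fun y => exists f, admissible f /\ y = f x.

Let orbit_directed x : directed (orbit x).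
Proof.
  split; [exists x, (fun x => x); split; [exact admissible_id | reflexivity] |].
  intros y1 y2 [f [Hf ->]] [g [Hg ->]]; exists (f (g x)); split.
  - exists (fun x => f (g x)); split; auto.
  - destruct Hf as [f1 [f2 _]], Hg as [_ [g2 _]]; split; [apply f1, g2 | apply f2].
Qed.

Let greatest_admissible x : L := sup (orbit x).

Let admissible_greatest : admissible greatest_admissible.
Proof.
  split; [| split].
  - intros x y Hxy; apply sup_least; intros z [f [Hf ->]].
    eapply le_trans; [apply (proj1 Hf _ _ Hxy) |]; apply sup_ub; exists f; auto.
  - intros x; apply sup_ub; exists (fun x => x); split; [exact admissible_id | reflexivity].
  - intros x Dx; apply D_directed_sup; [apply orbit_directed |].
    intros y [f [Hf ->]]; apply (proj2 (proj2 Hf)), Dx.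
Qed.

Lemma pataraia_fixpoint x0 : D x0 -> exists z, D z /\ k z = z.
Proof.
  intros Dx0; exists (greatest_admissible x0); split; [apply admissible_greatest, Dx0 |].
  apply le_antisym; [| apply k_inflationary].
  apply sup_ub; exists (fun x => k (greatest_admissible x)); split; auto.
  apply admissible_comp; [split; [| split] | apply admissible_greatest]; auto.
Qed.

End Pataraia.

Lemma scott_open_filter_mem_of_nu_sub (H : L -> Prop) b :
  scott_open_filter H -> subset (nu H) (opn b) -> H b.
Proof.
  intros [[[a0 Ha0] [H_up H_meet]] H_scott] Hsub.
  apply NNPP; intros Hb.
  set (D := fun y => le b y /\ ~ H y).
  set (k := fun y => sup (fun w => exists a, H a /\ w = imp a y)).
  assert (k_directed : forall y, directed (fun w => exists a, H a /\ w = imp a y)).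
  { intros y; split; [exists (imp a0 y), a0; auto |].
    intros w1 w2 [a [Ha ->]] [a' [Ha' ->]]; exists (imp (meet a a') y); split.
    - exists (meet a a'); auto.
    - split; apply imp_anti_l; [apply meet_lb_l | apply meet_lb_r]. }
  assert (k_inflationary : forall y, le y (k y)).
  { intros y; eapply le_trans; [apply (le_imp_r a0) |]; apply sup_ub; exists a0; auto. }
  destruct (@pataraia_fixpoint D k) with (x0 := b) as [z [[Hbz Hz] Ekz]].
  - intros E HE HED; split.
    + destruct HE as [[e Ee] _]; eapply le_trans; [apply (HED e Ee) | apply sup_ub, Ee].
    + intros HsE; destruct (H_scott E HE HsE) as [d [Ed Hd]]; exact (proj2 (HED d Ed) Hd).
  - intros x y Hxy; apply sup_least; intros w [a [Ha ->]].
    eapply le_trans; [apply imp_mono_r, Hxy |]; apply sup_ub; exists a; auto.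
  - exact k_inflationary.
  - (* If k y ∈ H then some a → y ∈ H with a ∈ H, and then y ≥ (a → y) ∧ a ∈ H. *)
    intros y [Hby Hy]; split; [eapply le_trans; [exact Hby | apply k_inflationary] |].
    intros Hky; destruct (H_scott _ (k_directed y) Hky) as [w [[a [Ha ->]] Hw]].
    apply Hy; eapply H_up; [apply (H_meet _ _ Hw Ha) | apply imp_modus_ponens].
  - split; [apply le_refl | exact Hb].
  - assert (z_in_nu : nu H z).
    { intros a Ha; apply opn_of_imp_le; rewrite <- Ekz at 2.
      apply sup_ub; exists a; auto. }
    (* z ∈ o(b) and b ≤ z force z = b → z = ⊤ ∈ H. *)
    apply Hz; eapply H_up; [exact Ha0 |].
    rewrite <- (proj1 (opn_iff b z) (Hsub z z_in_nu)).
    apply le_imp; eapply le_trans; [apply meet_lb_r | exact Hbz].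
Qed.

Lemma nu_sublocale (F : L -> Prop) : sublocale (nu F).
Proof.
  split.
  - intros A HA a Fa; apply opn_inf; intros y Ay; exact (HA y Ay a Fa).
  - intros c s Hs a Fa; apply opn_imp, Hs, Fa.
Qed.

Definition finite_joins (A : L -> Prop) : L -> Prop :=
  fun y => exists l, (forall a, In a l -> A a) /\ y = sup (fun a => In a l).

Lemma finite_joins_directed (A : L -> Prop) : directed (finite_joins A).
Proof.
  split; [exists (sup (fun a => In a nil)), nil; split; [intros a [] | reflexivity] |].
  intros y1 y2 [l1 [Hl1 ->]] [l2 [Hl2 ->]].
  exists (sup (fun a => In a (l1 ++ l2))); split.
  - exists (l1 ++ l2); split; [| reflexivity].
    intros a Ha; apply in_app_or in Ha as [Ha | Ha]; auto.
  - split; apply sup_least; intros a Ha; apply sup_ub, in_or_app; auto.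
Qed.

Lemma sup_le_sup_finite_joins (A : L -> Prop) : le (sup A) (sup (finite_joins A)).
Proof.
  apply sup_least; intros a Aa.
  apply (@le_trans _ _ (sup (fun b => In b (a :: nil)))); [apply sup_ub; left; reflexivity |].
  apply sup_ub; exists (a :: nil); split; [intros b [<- | []]; exact Aa | reflexivity].
Qed.

Lemma directed_ub_list (D : L -> Prop) (l : list L) :
  directed D -> (forall a, In a l -> D a) -> exists d, D d /\ forall a, In a l -> le a d.
Proof.
  intros [[d0 Dd0] Hdir]; induction l as [| a l IH]; intros Hl.
  - exists d0; split; [exact Dd0 | intros a []].
  - destruct IH as [d [Dd Hd]]; [intros b Hb; apply Hl; right; exact Hb |].
    destruct (Hdir a d (Hl a (or_introl eq_refl)) Dd) as [c [Dc [Hac Hdc]]].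
    exists c; split; [exact Dc |].
    intros b [<- | Hb]; [exact Hac | eapply le_trans; [apply Hd, Hb | exact Hdc]].
Qed.

Lemma nu_compact (H : L -> Prop) : scott_open_filter H -> compact_sl (nu H).
Proof.
  intros HH; split; [apply nu_sublocale |]; intros A HA.
  assert (H_supA : H (sup A)).
  { apply scott_open_filter_mem_of_nu_sub; [exact HH |].
    intros x Hx; apply sl_join_opens_of, HA, Hx. }
  destruct HH as [[_ [H_up _]] H_scott].
  destruct (H_scott _ (finite_joins_directed A)) as [d [[l [Hl ->]] Hd]].
  { eapply H_up; [exact H_supA | apply sup_le_sup_finite_joins]. }
  exists l; split; [exact Hl |].
  intros x Hx; exact (proj2 (sl_join_opens_of (fun a => In a l) x) (Hx _ Hd)).
Qed.

Lemma nu_inv_scott_open_filter (K : L -> Prop) :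
  compact_sl K -> scott_open_filter (nu_inv K).
Proof.
  intros [_ HK]; split; [split; [| split] |].
  - exists top; intros x _; apply opn_top.
  - intros a b Ha Hab x Kx; eapply opn_mono; eauto.
  - intros a b Ha Hb x Kx; apply opn_meet; auto.
  - intros D HD HsupD.
    destruct (HK D (fun x Kx => proj2 (sl_join_opens_of D x) (HsupD x Kx))) as [l [Hl Hsub]].
    destruct (directed_ub_list HD Hl) as [d [Dd Hd]].
    exists d; split; [exact Dd |]; intros x Kx.
    eapply opn_mono; [apply sup_least; exact Hd |].
    apply (sl_join_opens_of (fun a => In a l)), Hsub, Kx.
Qed.

Lemma fitE (S : L -> Prop) : fit S = nu (nu_inv S).
Proof. reflexivity. Qed.

Lemma nu_anti (F G : L -> Prop) : subset F G -> subset (nu G) (nu F).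
Proof. intros FG x Hx a Fa; apply Hx, FG, Fa. Qed.

Lemma nu_inv_anti (S T : L -> Prop) : subset S T -> subset (nu_inv T) (nu_inv S).
Proof. intros ST a Ha x Sx; apply Ha, ST, Sx. Qed.

Lemma nu_same (F G : L -> Prop) : same F G -> same (nu F) (nu G).
Proof. intros E x; split; apply nu_anti; intros a; apply E. Qed.

Lemma nu_inv_same (S T : L -> Prop) : same S T -> same (nu_inv S) (nu_inv T).
Proof. intros E a; split; apply nu_inv_anti; intros x; apply E. Qed.

Lemma sub_nu_inv_nu (F : L -> Prop) : subset F (nu_inv (nu F)).
Proof. intros a Fa x Hx; apply Hx, Fa. Qed.

Lemma nu_inv_nu_nu_inv (S : L -> Prop) : same (nu_inv (nu (nu_inv S))) (nu_inv S).
Proof.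
  intros a; split; [| apply sub_nu_inv_nu].
  intros Ha x Sx; apply Ha; intros b Hb; apply Hb, Sx.
Qed.

Lemma nu_inv_sl_join (Fam : (L -> Prop) -> Prop) :
  same (nu_inv (sl_join Fam)) (fun a => forall S, Fam S -> nu_inv S a).
Proof.
  intros a; split.
  - intros Ha S FS x Sx; apply Ha, (sl_join_incl FS), Sx.
  - apply sl_join_sub_opn.
Qed.

Lemma nu_inv_nu_IntSO (F : L -> Prop) : IntSO F -> same (nu_inv (nu F)) F.
Proof.
  intros [G [HG HF]] a; split; [| apply sub_nu_inv_nu].
  intros Ha; apply HF; intros H GH.
  apply scott_open_filter_mem_of_nu_sub; [apply HG, GH |].
  revert Ha; apply nu_inv_anti, nu_anti; intros b Fb; exact (proj1 (HF b) Fb H GH).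
Qed.

Lemma nu_IntSO_fitSk (F : L -> Prop) : IntSO F -> fitSk (nu F).
Proof.
  intros [G [HG HF]].
  set (Fam := fun S => exists H, G H /\ S = nu H).
  exists (sl_join Fam); split.
  - exists Fam; split; [intros S [H [GH ->]]; apply nu_compact, HG, GH | intros x; reflexivity].
  - rewrite fitE; apply nu_same; intros a.
    rewrite (HF a), (nu_inv_sl_join Fam a); split.
    + intros Ha S [H [GH ->]]; apply sub_nu_inv_nu, Ha, GH.
    + intros Ha H GH; apply scott_open_filter_mem_of_nu_sub; [apply HG, GH |].
      apply Ha; exists H; auto.
Qed.

Lemma nu_inv_fitSk_IntSO (T : L -> Prop) : fitSk T -> IntSO (nu_inv T).
Proof.
  intros [S [[Fam [HFam HS]] HT]].
  exists (fun H => exists K, Fam K /\ H = nu_inv K); split.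
  - intros H [K [FK ->]]; apply nu_inv_scott_open_filter, HFam, FK.
  - intros a; rewrite (nu_inv_same HT a), fitE, (nu_inv_nu_nu_inv S a), (nu_inv_same HS a),
      (nu_inv_sl_join Fam a); split.
    + intros Ha H [K [FK ->]]; apply Ha, FK.
    + intros Ha K FK; apply Ha; exists K; auto.
Qed.

Lemma nu_nu_inv_fitSk (T : L -> Prop) : fitSk T -> same (nu (nu_inv T)) T.
Proof.
  intros [S [_ HT]] x.
  rewrite (nu_same (nu_inv_same HT) x), (HT x), fitE.
  apply nu_same, nu_inv_nu_nu_inv.
Qed.

End Frame.

Theorem mainTheorem14 (L : frame) :
  (forall F : L -> Prop, IntSO F -> fitSk (nu F)) /\
  (forall T : L -> Prop, fitSk T -> IntSO (nu_inv T)) /\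
  (forall F : L -> Prop, IntSO F -> same (nu_inv (nu F)) F) /\
  (forall T : L -> Prop, fitSk T -> same (nu (nu_inv T)) T) /\
  (forall F G : L -> Prop, IntSO F -> IntSO G ->
     (filter_le F G <-> subset (nu F) (nu G))).
Proof.
  split; [exact nu_IntSO_fitSk |].
  split; [exact nu_inv_fitSk_IntSO |].
  split; [exact nu_inv_nu_IntSO |].
  split; [exact nu_nu_inv_fitSk |].
  intros F G HF HG; split; [apply nu_anti |].
  intros Hsub a Ga.
  apply (nu_inv_nu_IntSO HF), (nu_inv_anti Hsub), (nu_inv_nu_IntSO HG), Ga.
Qed.
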